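(* Let $\beta\in B_3$ be conjugate to $\sigma_2^{-a_k}\sigma_1\cdots\sigma_2^{-a_1}\sigma_1\Delta^{2d}$, where $k\ge1$, $d\in\mathbb{Z}$, all $a_i\geq0$ and at least one $a_i\neq0$. Then both eigenvalues of $\rho(\beta)$ lie in $\mathbb{E}$. Furthermore, the eigenvalues of $\rho(\beta)$ (1) are both positive in $(\mathbb{E},Q)$ if $k$ and $a_1+\cdots+a_k$ are both even; (2) are both negative if $k$ and $a_1-\cdots-a_k$ are both odd; and (3) have opposite signs if $k-a_1-\cdots-a_k$ is odd.
   Context: $B_3$ is the braid group generated by $\sigma_1,\sigma_2$, and $\Delta=(\sigma_1\sigma_2\sigma_1)^2$. The reduced Burau representation $\rho:B_3\to\mathrm{GL}_2(\mathbb{Z}[t^{\pm1}])$ is the homomorphism with $\rho(\sigma_1)=\begin{pmatrix}-t&0\\1&1\end{pmatrix}$, $\rho(\sigma_2)=\begin{pmatrix}1&t\\0&-t\end{pmatrix}$. $\mathbb{E}=\bigcup_{n\ge1}\mathbb{R}((t^{1/n}))$ is the field of Puiseux series over $\mathbb{R}$, containing $\mathbb{Z}[t^{\pm1}]$, with the ordering whose positive cone $Q$ consists of the nonzero series whose lowest-exponent nonzero coefficient is positive. *)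

From HB Require Import structures.
From mathcomp Require Import all_boot all_order all_algebra.
From mathcomp Require Import boolp classical_sets functions cardinality fsbigop.
From mathcomp Require Import Rstruct.
From Stdlib Require Rdefinitions.

Set Implicit Arguments.
Unset Strict Implicit.
Unset Printing Implicit Defensive.
Import Order.TTheory GRing.Theory Num.Theory.
Local Open Scope ring_scope.

(* A letter (g, e) stands for sigma_1 (g = false) or sigma_2 (g = true),       *)
(* to the power -1 if e = true and +1 if e = false.                            *)
Definition letter := (bool * bool)%type.
Definition word := seq letter.

Definition sig1 : letter := (false, false).
Definition sig2 : letter := (true, false).
Definition linv (x : letter) : letter := (x.1, ~~ x.2).
Definition winv (w : word) : word := rev (map linv w).

Inductive braid_eq : word -> word -> Prop :=
| beq_refl w : braid_eq w w
| beq_sym u v : braid_eq u v -> braid_eq v u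
| beq_trans u v w : braid_eq u v -> braid_eq v w -> braid_eq u w
| beq_cat u u' v v' : braid_eq u u' -> braid_eq v v' -> braid_eq (u ++ v) (u' ++ v')
| beq_cancel x : braid_eq [:: x; linv x] [::]
| beq_braid : braid_eq [:: sig1; sig2; sig1] [:: sig2; sig1; sig2].

Definition conjugate_B3 (u v : word) : Prop :=
  exists g : word, braid_eq u (g ++ v ++ winv g).

Definition wpow (w : word) (n : int) : word :=
  match n with
  | Posz m => flatten (nseq m w)
  | Negz m => flatten (nseq m.+1 (winv w))
  end.

Definition Delta : word := [:: sig1; sig2; sig1; sig1; sig2; sig1].

(* sigma_2^{-a_k} sigma_1 ... sigma_2^{-a_1} sigma_1 Delta^{2d},
   for a = [:: a_1; ...; a_k] *)
Definition model_word (a : seq nat) (d : int) : word :=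
  flatten [seq nseq ai (linv sig2) ++ [:: sig1] | ai <- rev a]
  ++ wpow Delta (2 * d).

(* Reduced Burau representation.  An element of GL_2(Z[t^{+-1}]) is encoded   *)
(* as a pair (M, s) with M a 2x2 matrix over Z[t] = {poly int} (t = 'X),      *)
(* standing for t^{-s} M.                                                     *)
Definition mx2 (a b c d : {poly int}) : 'M[{poly int}]_2 :=
  \matrix_(i < 2, j < 2)
    if i == ord0 then (if j == ord0 then a else b) else (if j == ord0 then c else d).

(* rho(s1) = [[-t,0],[1,1]], rho(s2) = [[1,t],[0,-t]],
   rho(s1^-1) = t^-1 [[-1,0],[1,t]], rho(s2^-1) = t^-1 [[t,t],[0,-1]] *)
Definition rho_letter (x : letter) : 'M[{poly int}]_2 * nat :=
  match x with
  | (false, false) => (mx2 (- 'X) 0 1 1, 0%N)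
  | (true, false) => (mx2 1 'X 0 (- 'X), 0%N)
  | (false, true) => (mx2 (-1) 0 1 'X, 1%N)
  | (true, true) => (mx2 'X 'X 0 (-1), 1%N)
  end.

Lemma rho_letter_inv (x : letter) :
  (rho_letter x).1 *m (rho_letter (linv x)).1
  = ('X ^+ ((rho_letter x).2 + (rho_letter (linv x)).2))%:M.
Proof.
case: x => [[] []] /=; apply/matrixP => i j;
rewrite !mxE !big_ord_recl big_ord0 !mxE /=;
case: i => [[|[|i]] Hi] //; case: j => [[|[|j]] Hj] //=;
rewrite ?expr1 ?expr0 /= ?mulr0 ?mul0r ?mulr1 ?mul1r ?addr0 ?add0r ?mulrN ?mulNr ?opprK //;
by rewrite ?mulr1n ?mulr0n ?mul1r ?mulr1 ?subrr ?addNr.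
Qed.

Definition rho (w : word) : 'M[{poly int}]_2 * nat :=
  foldr (fun x acc => ((rho_letter x).1 *m acc.1, ((rho_letter x).2 + acc.2)%N))
        (1%:M, 0%N) w.

(* The field E of real Puiseux series.  A series sum_q c_q t^q is encoded by  *)
(* its coefficient function c : rat -> R; it is a Puiseux series iff its       *)
(* support is contained in (1/n)Z and is bounded below, for some n >= 1.       *)
Definition series := rat -> Rdefinitions.R.

Definition is_puiseux (c : series) : Prop :=
  exists (n : nat) (m : rat), (0 < n)%N /\
    forall q : rat, c q <> 0 -> m <= q /\ denq (q *+ n) = 1.

Definition Eadd (c e : series) : series := fun q => c q + e q.

(* Cauchy product (the sum is finite for Puiseux series) *)
Definition Emul (c e : series) : series :=
  fun q => (\sum_(r \in [set: rat]) (c r * e (q - r)))%R.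

Definition Epos (c : series) : Prop :=
  exists q0 : rat, 0 < c q0 /\ forall q, q < q0 -> c q = 0.
Definition Eneg (c : series) : Prop := Epos (fun q => - c q).

(* embedding Z[t^{+-1}] -> E : t^{-s} p  |->  its coefficient function *)
Definition laurE (p : {poly int}) (s : nat) : series :=
  fun q => if denq q == 1 then
             (if (0 <= numq q + s%:Z)%R then ((p`_(absz (numq q + s%:Z)))%:~R : Rdefinitions.R) else 0)
           else 0.

Definition rho_tr (w : word) : series := laurE (\tr (rho w).1) (rho w).2.
Definition rho_det (w : word) : series := laurE (\det (rho w).1) (2 * (rho w).2)%N.

Definition altsum (a : seq nat) : int :=
  match a with
  | [::] => 0
  | x :: r => x%:Z - (\sum_(y <- r) y)%N%:Z
  end.

Definition oddz (z : int) : bool := odd (absz z).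

(* Up to conjugation and the factor Delta^(2d), which rho sends to a power of
   t times the identity, rho(beta) is the product of the matrices
   rho(sigma_2^(-a) sigma_1); each is [[0,0],[(-1)^a,(-1)^a]] mod t and has
   determinant (-t)^(a+1).  So, after normalising by a power of t, the
   characteristic polynomial of rho(beta) is X^2 - tau X + eps t^p with
   tau in Z[[t]], tau(0) = (-1)^S, eps = (-1)^(S+k) and p = S + k > 0, where
   S = a_1 + ... + a_k.  Since tau(0) <> 0 and p > 0, solving
   (tau - t^p mu) mu = eps coefficient by coefficient splits it over R[[t]]
   into the roots tau - t^p mu and t^p mu, with lowest coefficients (-1)^S
   and eps / tau(0) = (-1)^k: the signs of the eigenvalues are read off
   from the parities of S and k. *)

From HB Require Import structures.
From mathcomp Require Import all_boot all_order all_algebra.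
From mathcomp Require Import boolp classical_sets functions cardinality fsbigop.
From mathcomp Require Import Rstruct.
From mathcomp Require Import ring zify.

Set Implicit Arguments.
Unset Strict Implicit.
Unset Printing Implicit Defensive.
Import Order.TTheory GRing.Theory Num.Theory.
Local Open Scope ring_scope.

Local Notation RR := Rdefinitions.R.

Definition ps_const (R : nzRingType) (c : R) (n : nat) : R :=
  if n == 0%N then c else 0.

Definition ps_shift (R : nzRingType) (k : nat) (f : nat -> R) (n : nat) : R :=
  if (k <= n)%N then f (n - k)%N else 0.

Definition ps_mul (R : nzRingType) (f g : nat -> R) (n : nat) : R :=
  \sum_(i < n.+1) f i * g (n - i)%N.

Lemma ps_shift_small (R : nzRingType) k (f : nat -> R) n :
  (n < k)%N -> ps_shift k f n = 0.
Proof. by rewrite /ps_shift ltnNge => /negbTE->. Qed.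

Section CourseOfValues.
Variables (T : Type) (x0 : T) (step : (nat -> T) -> nat -> T).
Hypothesis step_below :
  forall f g r, (forall j, (j < r)%N -> f j = g j) -> step f r = step g r.

Fixpoint cov_prefix (n : nat) : seq T :=
  if n is n'.+1 then rcons (cov_prefix n') (step (nth x0 (cov_prefix n')) n)
  else [:: step (fun=> x0) 0].

Definition cov_fix (n : nat) : T := nth x0 (cov_prefix n) n.

Lemma size_cov_prefix n : size (cov_prefix n) = n.+1.
Proof. by elim: n => //= n IH; rewrite size_rcons IH. Qed.

Lemma nth_cov_prefix n j : (j <= n)%N -> nth x0 (cov_prefix n) j = cov_fix j.
Proof.
elim: n => [|n IH]; first by rewrite leqn0 => /eqP->.
rewrite leq_eqVlt => /orP[/eqP-> //|lt_jn].
by rewrite /= nth_rcons size_cov_prefix lt_jn IH.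
Qed.

Lemma cov_fixE r : cov_fix r = step cov_fix r.
Proof.
case: r => [|n]; first exact: step_below.
rewrite /cov_fix /= nth_rcons size_cov_prefix ltnn eqxx.
by apply: step_below => j lt_jn; rewrite nth_cov_prefix.
Qed.

End CourseOfValues.

Section QuadraticSplit.
Variables (F : fieldType) (tau : nat -> F) (eps : F) (p : nat).
Hypotheses (p_gt0 : (0 < p)%N) (tau0_neq0 : tau 0%N != 0).

(* Coefficient [r] of [(tau - t^p mu) mu = eps], solved for [mu r]; as
   [p > 0], the right-hand side only involves [mu] below [r]. *)
Definition split_step (mu : nat -> F) (r : nat) : F :=
  (tau 0%N)^-1 * (ps_const eps r - \sum_(i < r) tau i.+1 * mu (r - i.+1)%N
                  + \sum_(i < r.+1) ps_shift p mu i * mu (r - i)%N).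

Lemma split_step_below (f g : nat -> F) r :
  (forall j, (j < r)%N -> f j = g j) -> split_step f r = split_step g r.
Proof.
move=> eq_fg; rewrite /split_step; congr (_ * (_ - _ + _)).
  by apply: eq_bigr => -[i lt_ir] _; rewrite eq_fg //=; lia.
apply: eq_bigr => -[i lt_ir] _; rewrite /ps_shift /=.
by case: ifP => [le_pi|_]; rewrite ?mul0r // !eq_fg //; lia.
Qed.

Definition split_mu : nat -> F := cov_fix 0 split_step.

Lemma split_muE r :
  tau 0%N * split_mu r = ps_const eps r
    - \sum_(i < r) tau i.+1 * split_mu (r - i.+1)%N
    + \sum_(i < r.+1) ps_shift p split_mu i * split_mu (r - i)%N.
Proof.
rewrite {1}/split_mu (cov_fixE 0 split_step_below) -/split_mu.
by rewrite /split_step mulrA mulfV // mul1r.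
Qed.

Definition split_nu (n : nat) : F := tau n - ps_shift p split_mu n.

Lemma ps_mul_split : ps_mul split_nu split_mu = ps_const eps.
Proof.
apply/funext => r; rewrite /ps_mul; under eq_bigr do rewrite mulrBl.
rewrite sumrB big_ord_recl subn0 split_muE.
ring.
Qed.

Lemma ps_quadratic_split :
  exists nu mu : nat -> F,
    [/\ forall n, nu n + ps_shift p mu n = tau n, ps_mul nu mu = ps_const eps,
        nu 0%N = tau 0%N & mu 0%N = eps / tau 0%N].
Proof.
exists split_nu, split_mu; split.
- by move=> n; rewrite subrK.
- exact: ps_mul_split.
- by rewrite /split_nu ps_shift_small ?subr0.
- apply: (mulfI tau0_neq0); rewrite split_muE big_ord0 big_ord1 ps_shift_small //.
  by rewrite [RHS]mulrC divfK // mul0r subr0 addr0.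
Qed.

End QuadraticSplit.

(* The Laurent series [t^m * sum_n f n t^n]. *)
Definition laurent (m : int) (f : nat -> RR) : series :=
  fun q => if denq q == 1 then
             (if 0 <= numq q - m then f `|numq q - m|%N else 0) else 0.

Lemma laurent_int m f (z : int) :
  laurent m f z%:~R = if 0 <= z - m then f `|z - m|%N else 0.
Proof. by rewrite /laurent numq_int denq_int eqxx. Qed.

Lemma laurent_neq0 m f q : laurent m f q != 0 -> exists i : nat, q = (m + i%:Z)%:~R.
Proof.
rewrite /laurent; case: ifP => [q_int|]; last by rewrite eqxx.
case: ifP => [ge_qm _|]; last by rewrite eqxx.
exists `|numq q - m|%N; rewrite gez0_abs // addrCA subrr addr0.
by rewrite (numqK (q_int : q \is a Num.int)).
Qed.

Lemma laurent_shift m k f : laurent m (ps_shift k f) = laurent (m + k%:Z) f.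
Proof.
apply/funext => q; rewrite /laurent /ps_shift; case: ifP => // _.
have [lt_qm|ge_qm] := ltP (numq q - m) 0.
  by rewrite !ifN //; lia.
have [n nE] : exists n : nat, numq q - m = n by exists (absz (numq q - m)); rewrite gez0_abs.
have -> : numq q - (m + k%:Z) = n%:Z - k%:Z by lia.
rewrite nE /=; case: leqP => [le_kn|lt_nk]; first by rewrite subzn.
by rewrite ifN //; lia.
Qed.

Lemma Eadd_laurent m f g :
  Eadd (laurent m f) (laurent m g) = laurent m (fun n => f n + g n).
Proof. by apply/funext => q; rewrite /Eadd /laurent; do 2?case: ifP; rewrite ?addr0. Qed.

Lemma laurent_mul_support m m' f g q r :
  laurent m f r * laurent m' g (q - r) != 0 ->
  exists i j : nat, r = (m + i%:Z)%:~R /\ q = (m + m' + (i + j)%N%:Z)%:~R.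
Proof.
rewrite mulf_eq0 negb_or => /andP[/laurent_neq0[i rE] /laurent_neq0[j qrE]].
exists i, j; split => //.
by rewrite -(subrK r q) qrE rE -rmorphD /=; congr intr; lia.
Qed.

Lemma Emul_laurent m m' f g :
  Emul (laurent m f) (laurent m' g) = laurent (m + m') (ps_mul f g).
Proof.
apply/funext => q; rewrite /Emul.
have [q_int|q_nint] := boolP (q \is a Num.int); last first.
  rewrite [RHS]/laurent -Qint_def (negbTE q_nint) fsbig1 // => r _.
  by apply: contraNeq q_nint => /laurent_mul_support[i [j [_ ->]]]; apply: rpred_int.
rewrite -(numqK q_int) laurent_int; set N := numq q.
have [lt_Nm|ge_Nm] := ltP (N - (m + m')) 0.
  rewrite fsbig1 // => r _; apply: contraTeq lt_Nm.
  by case/laurent_mul_support=> i [j [_ /(congr1 numq)]]; rewrite !numq_int /N => ->; lia.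
have [n nE] : exists n : nat, N - (m + m') = n by exists (absz (N - (m + m'))%R); rewrite gez0_abs.
rewrite nE /= /ps_mul.
pose rs := [seq (m + i%:Z)%:~R : rat | i <- iota 0 n.+1].
have rs_uniq : uniq rs.
  rewrite map_inj_uniq ?iota_uniq // => i j /(congr1 numq).
  by rewrite !numq_int => /addrI [].
rewrite -(fsbig_widen [set` rs] setT) //; last first.
  move=> r [_ /= /negP r_notin]; apply/eqP; apply: contraR r_notin.
  case/laurent_mul_support=> i [j [rE /(congr1 numq)]]; rewrite !numq_int /N => NE.
  by apply/mapP; exists i => //; rewrite mem_iota; lia.
rewrite -fsbig_seq // big_map -[iota 0 n.+1]/(index_iota 0 n.+1) big_mkord.
apply: eq_bigr => -[i /= lt_in] _; rewrite -rmorphB !laurent_int.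
have -> : m + i%:Z - m = i%:Z by ring.
have le_in : (i <= n)%N by rewrite -ltnS.
by have -> : N - (m + i%:Z) - m' = (n - i)%N%:Z by rewrite -subzn //; lia.
Qed.

Lemma is_puiseux_laurent m f : is_puiseux (laurent m f).
Proof.
exists 1%N, m%:~R; split => // q; rewrite /laurent mulr1n.
case: ifP => [q_int|_]; last by case.
case: ifP => [ge_qm _|_]; last by case.
rewrite -{1}(numqK (q_int : q \is a Num.int)) ler_int (eqP q_int).
by split => //; lia.
Qed.

Lemma Epos_laurent m f : 0 < f 0%N -> Epos (laurent m f).
Proof.
move=> f0_gt0; exists m%:~R; split; first by rewrite laurent_int subrr.
move=> q lt_qm; rewrite /laurent; case: ifP => // q_int.
by rewrite ifN //; move: lt_qm; rewrite -{1}(numqK (q_int : q \is a Num.int)) ltr_int; lia.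
Qed.

Lemma Eneg_laurent m f : f 0%N < 0 -> Eneg (laurent m f).
Proof.
move=> f0_lt0; rewrite /Eneg.
have -> : (fun q => - laurent m f q) = laurent m (fun n => - f n).
  by apply/funext => q; rewrite /laurent; do 2?case: ifP; rewrite ?oppr0.
by apply: Epos_laurent; rewrite oppr_gt0.
Qed.

Lemma laurent_sign m f n : f 0%N = (-1) ^+ n ->
  if odd n then Eneg (laurent m f) else Epos (laurent m f).
Proof.
rewrite -signr_odd => f0E; case: ifP => odd_n; rewrite odd_n in f0E.
  by apply: Eneg_laurent; rewrite f0E ltrN10.
by apply: Epos_laurent; rewrite f0E ltr01.
Qed.

Definition ps_of_poly (p : {poly int}) (n : nat) : RR := (p`_n)%:~R.

Lemma ps_of_polyXnM k p : ps_of_poly ('X^k * p) = ps_shift k (ps_of_poly p).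
Proof.
apply/funext => n; rewrite /ps_of_poly /ps_shift coefXnM ltnNge.
by case: leqP.
Qed.

Lemma ps_of_polyC (c : int) : ps_of_poly c%:P = ps_const c%:~R.
Proof. by apply/funext => n; rewrite /ps_of_poly /ps_const coefC; case: eqP. Qed.

Lemma laurEE p s : laurE p s = laurent (- s%:Z) (ps_of_poly p).
Proof. by apply/funext => q; rewrite /laurE /laurent opprK. Qed.

Lemma laurE_XnM k p s : laurE ('X^k * p) s = laurent (k%:Z - s%:Z) (ps_of_poly p).
Proof. by rewrite laurEE ps_of_polyXnM laurent_shift addrC. Qed.

Lemma laurE_XnM_shift k p s : laurE ('X^k * p) (s + k) = laurE p s.
Proof. by rewrite laurE_XnM laurEE; congr laurent; lia. Qed.

Lemma laurent_quadratic_roots m p (tau : nat -> RR) eps :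
  (0 < p)%N -> tau 0%N != 0 ->
  exists nu mu : nat -> RR,
    [/\ Eadd (laurent m nu) (laurent (m + p%:Z) mu) = laurent m tau,
        Emul (laurent m nu) (laurent (m + p%:Z) mu) = laurent (m + (m + p%:Z)) (ps_const eps),
        nu 0%N = tau 0%N & mu 0%N = eps / tau 0%N].
Proof.
move=> p_gt0 tau0_neq0.
have [nu [mu [add_nu mul_nu nu0 mu0]]] := ps_quadratic_split eps p_gt0 tau0_neq0.
exists nu, mu; split => //.
- by rewrite -laurent_shift Eadd_laurent; congr laurent; apply/funext.
- by rewrite Emul_laurent mul_nu.
Qed.

Definition mx22 (T : Type) (a b c d : T) : 'M[T]_2 :=
  \matrix_(i < 2, j < 2)
    if i == ord0 then (if j == ord0 then a else b) else (if j == ord0 then c else d).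

Lemma mx2E (a b c d : {poly int}) : mx2 a b c d = mx22 a b c d.
Proof. by []. Qed.

Lemma mul_mx22 (R : pzRingType) (a b c d a' b' c' d' : R) :
  mx22 a b c d *m mx22 a' b' c' d' =
  mx22 (a * a' + b * c') (a * b' + b * d') (c * a' + d * c') (c * b' + d * d').
Proof.
apply/matrixP => i j; rewrite !mxE !big_ord_recl big_ord0 !mxE /=.
by case: i => [[|[|i]] ?] //; case: j => [[|[|j]] ?] //=; rewrite addr0.
Qed.

Lemma scalar_mx22 (R : pzRingType) (a : R) : a%:M = mx22 a 0 0 a.
Proof.
apply/matrixP => i j; rewrite !mxE.
by case: i => [[|[|i]] ?] //; case: j => [[|[|j]] ?].
Qed.

Lemma map_mx22 (T U : Type) (f : T -> U) (a b c d : T) :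
  map_mx f (mx22 a b c d) = mx22 (f a) (f b) (f c) (f d).
Proof.
apply/matrixP => i j; rewrite !mxE.
by case: i => [[|[|i]] ?] //; case: j => [[|[|j]] ?].
Qed.

Lemma det_mx22 (R : comPzRingType) (a b c d : R) : \det (mx22 a b c d) = a * d - b * c.
Proof.
rewrite (expand_det_row _ ord0) !big_ord_recl big_ord0 /cofactor !det_mx11 !mxE /=.
by rewrite addr0 expr0 expr1 mul1r; ring.
Qed.

Lemma mxtrace_mx22 (R : pzRingType) (a b c d : R) : \tr (mx22 a b c d) = a + d.
Proof. by rewrite /mxtrace !big_ord_recl big_ord0 !mxE addr0. Qed.

Lemma rho_cat u v :
  rho (u ++ v) = ((rho u).1 *m (rho v).1, ((rho u).2 + (rho v).2)%N).
Proof.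
elim: u => [|x u IH] /=; first by case: (rho v) => M s; rewrite mul1mx.
by rewrite IH /= mulmxA addnA.
Qed.

(* [(A, a)] and [(B, b)] encode the same element [t^-a A = t^-b B] of
   [GL_2(Z[t^{+-1}])]. *)
Definition lmx_eq (A B : 'M[{poly int}]_2 * nat) : Prop :=
  'X^(B.2) *: A.1 = 'X^(A.2) *: B.1.

Lemma scalemxXn_inj k : injective (fun A : 'M[{poly int}]_2 => 'X^k *: A).
Proof.
move=> A B /= eq_AB; apply/eqP; rewrite -subr_eq0.
have /eqP : 'X^k *: (A - B) = 0 by rewrite scalerBr eq_AB subrr.
by rewrite scalemx_eq0 (negbTE (monic_neq0 (monicXn _ _))).
Qed.

Lemma lmx_eq_trans A B C : lmx_eq A B -> lmx_eq B C -> lmx_eq A C.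
Proof.
move: A B C => [A a] [B b] [C c]; rewrite /lmx_eq /= => eq_AB eq_BC.
have scaleXnC k l (M : 'M[{poly int}]_2) : 'X^k *: ('X^l *: M) = 'X^l *: ('X^k *: M).
  by rewrite !scalerA mulrC.
apply: (@scalemxXn_inj b) => /=.
by rewrite scaleXnC eq_AB scaleXnC eq_BC scaleXnC.
Qed.

Lemma lmx_eq_mul A A' B B' : lmx_eq A A' -> lmx_eq B B' ->
  lmx_eq (A.1 *m B.1, (A.2 + B.2)%N) (A'.1 *m B'.1, (A'.2 + B'.2)%N).
Proof.
move: A A' B B' => [A a] [A' a'] [B b] [B' b']; rewrite /lmx_eq /= => eq_A eq_B.
have scaleXnD_mul k l (M N : 'M[{poly int}]_2) :
    'X^(k + l) *: (M *m N) = ('X^k *: M) *m ('X^l *: N).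
  by rewrite -scalemxAl -scalemxAr scalerA -exprD.
by rewrite !scaleXnD_mul eq_A eq_B.
Qed.

Lemma braid_eq_rho u v : braid_eq u v -> lmx_eq (rho u) (rho v).
Proof.
elim=> {u v} [w|u v _ eq_uv|u v w _ eq_uv _ eq_vw|u u' v v' _ eq_u _ eq_v|x|].
- by [].
- by rewrite /lmx_eq eq_uv.
- exact: lmx_eq_trans eq_uv eq_vw.
- by rewrite !rho_cat; apply: lmx_eq_mul.
- by rewrite /lmx_eq /= mulmx1 rho_letter_inv /= addn0 expr0 scale1r scalemx1.
- by rewrite /lmx_eq /= !mulmx1 !mx2E !mul_mx22; congr (_ *: mx22 _ _ _ _); ring.
Qed.

Lemma linvK : involutive linv.
Proof. by case=> g e; rewrite /linv /= negbK. Qed.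

Lemma braid_eq_winv_cat g : braid_eq (winv g ++ g) [::].
Proof.
elim: g => [|x g IH]; first exact: beq_refl.
have -> : winv (x :: g) ++ x :: g = winv g ++ ([:: linv x; x] ++ g).
  by rewrite /winv /= rev_cons -cats1 -catA.
apply: beq_trans IH; apply: beq_cat; first exact: beq_refl.
change (braid_eq ([:: linv x; x] ++ g) ([::] ++ g)).
by apply: beq_cat (beq_refl g); rewrite -{2}(linvK x); apply: beq_cancel.
Qed.

Lemma rho_winv_mul g :
  (rho (winv g)).1 *m (rho g).1 = ('X^((rho (winv g)).2 + (rho g).2))%:M.
Proof.
have := braid_eq_rho (braid_eq_winv_cat g).
by rewrite /lmx_eq rho_cat /= expr0 scale1r scalemx1 => ->.
Qed.

Lemma lmx_eq_tr A B : lmx_eq A B -> laurE (\tr A.1) A.2 = laurE (\tr B.1) B.2.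
Proof.
move: A B => [A a] [B b]; rewrite /lmx_eq /= => eq_AB.
rewrite -(laurE_XnM_shift b) -mxtraceZ eq_AB mxtraceZ addnC.
exact: laurE_XnM_shift.
Qed.

Lemma lmx_eq_det A B :
  lmx_eq A B -> laurE (\det A.1) (2 * A.2) = laurE (\det B.1) (2 * B.2).
Proof.
move: A B => [A a] [B b]; rewrite /lmx_eq /= => /(congr1 determinant).
rewrite !detZ -!exprM => eq_det.
rewrite -(laurE_XnM_shift (b * 2)) eq_det -(laurE_XnM_shift (a * 2) _ (2 * b)).
by congr laurE; lia.
Qed.

Lemma conjugate_B3_rho beta w : conjugate_B3 beta w ->
  rho_tr beta = rho_tr w /\ rho_det beta = rho_det w.
Proof.
case=> g /braid_eq_rho eq_beta.
rewrite /rho_tr /rho_det (lmx_eq_tr eq_beta) (lmx_eq_det eq_beta) !rho_cat /=.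
have := rho_winv_mul g.
set G := (rho g).1; set H := (rho (winv g)).1; set W := (rho w).1.
set k := ((rho (winv g)).2 + (rho g).2)%N => HG.
split.
  rewrite mxtrace_mulC -mulmxA HG mul_mx_scalar mxtraceZ laurE_XnM laurEE.
  by congr laurent; lia.
have -> : \det (G *m (W *m H)) = 'X^(k * 2) * \det W.
  by rewrite exprM -det_scalar -HG !det_mulmx; ring.
by rewrite laurE_XnM laurEE; congr laurent; lia.
Qed.

Definition mx_at0 (M : 'M[{poly int}]_2) : 'M[int]_2 := map_mx (horner_eval 0) M.

Lemma mx_at0_mul A B : mx_at0 (A *m B) = mx_at0 A *m mx_at0 B.
Proof. exact: map_mxM. Qed.

Lemma rho_cons x w :
  rho (x :: w) = ((rho_letter x).1 *m (rho w).1, ((rho_letter x).2 + (rho w).2)%N).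
Proof. by []. Qed.

Definition block (a : nat) : word := nseq a (linv sig2) ++ [:: sig1].

Lemma rho_block a :
  [/\ (rho (block a)).2 = a,
      mx_at0 (rho (block a)).1 = mx22 0 0 ((-1) ^+ a) ((-1) ^+ a) &
      \det (rho (block a)).1 = (- 'X) ^+ a.+1].
Proof.
elim: a => [|a [IH2 IH0 IHdet]].
  rewrite /block /= mulmx1 mx2E /mx_at0 map_mx22 det_mx22 !horner_evalE !hornerE.
  by rewrite expr1 expr0 oppr0 subr0.
have -> : block a.+1 = linv sig2 :: block a by [].
rewrite rho_cons /= mx_at0_mul IH2 IH0 det_mulmx IHdet mx2E.
rewrite /mx_at0 map_mx22 det_mx22 mul_mx22 !horner_evalE !hornerE !exprS.
by split => //; ring.
Qed.

Lemma rho_blocks (s : seq nat) : s != [::] ->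
  [/\ (rho (flatten (map block s))).2 = sumn s,
      mx_at0 (rho (flatten (map block s))).1 = mx22 0 0 ((-1) ^+ sumn s) ((-1) ^+ sumn s) &
      \det (rho (flatten (map block s))).1 = (- 'X) ^+ (sumn s + size s)].
Proof.
elim: s => [|a s IH] // _; have [rho2 at0 det] := rho_block a.
case: s IH => [_|a' s IH]; first by rewrite /= cats0 rho2 at0 det addn0 addn1.
have [IH2 IH0 IHdet] := IH isT.
rewrite [flatten _]/= rho_cat /= mx_at0_mul rho2 at0 IH2 IH0 mul_mx22 det_mulmx det IHdet.
rewrite !mul0r !mulr0 !add0r -!exprD; split => //=; congr (_ ^+ _); lia.
Qed.

Lemma rho_Delta : rho Delta = ('X^3%:M, 0%N).
Proof.
by rewrite /rho /= !mulmx1 !mx2E !mul_mx22 scalar_mx22; congr (mx22 _ _ _ _, _); ring.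
Qed.

Lemma rho_winv_Delta : rho (winv Delta) = ('X^3%:M, 6%N).
Proof.
by rewrite /rho /= !mulmx1 !mx2E !mul_mx22 scalar_mx22; congr (mx22 _ _ _ _, _); ring.
Qed.

Lemma rho_flatten_nseq w c s n : rho w = (c%:M, s) ->
  rho (flatten (nseq n w)) = ((c ^+ n)%:M, (n * s)%N).
Proof.
move=> rho_w; elim: n => [|n IH]; first by rewrite expr0.
by rewrite [flatten _]/= rho_cat rho_w IH /= -scalar_mxM exprS mulSn.
Qed.

Lemma rho_wpow_Delta n : exists j s : nat, rho (wpow Delta n) = ('X^j%:M, s).
Proof.
case: n => n.
  by exists (3 * n)%N, (n * 0)%N; rewrite (rho_flatten_nseq _ rho_Delta) exprM.
by exists (3 * n.+1)%N, (n.+1 * 6)%N; rewrite (rho_flatten_nseq _ rho_winv_Delta) exprM.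
Qed.

Lemma rho_model_word a d : (0 < size a)%N ->
  exists (m : int) (tau : nat -> RR),
    [/\ rho_tr (model_word a d) = laurent m tau,
        rho_det (model_word a d) =
          laurent (m + (m + (sumn a + size a)%N%:Z)) (ps_const ((-1) ^+ (sumn a + size a))) &
        tau 0%N = (-1) ^+ sumn a].
Proof.
move=> a_gt0; have [j [s rhoD]] := rho_wpow_Delta (2 * d).
have /rho_blocks[] : rev a != [::] by rewrite -size_eq0 size_rev -lt0n.
rewrite sumn_rev size_rev; set P := rho _ => P2 P_at0 detP.
have -> : model_word a d = flatten (map block (rev a)) ++ wpow Delta (2 * d) by [].
exists (j%:Z - (sumn a + s)%N%:Z), (ps_of_poly (\tr P.1)); split.
- rewrite /rho_tr rho_cat rhoD /= mul_mx_scalar mxtraceZ laurE_XnM P2.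
  by congr laurent; lia.
- rewrite /rho_det rho_cat rhoD /= det_mulmx detP det_scalar.
  have -> : (- 'X) ^+ (sumn a + size a) * ('X^j) ^+ 2 =
            'X^(sumn a + size a + j * 2) * ((-1) ^+ (sumn a + size a) : int)%:P.
    by rewrite rmorphXn rmorphN1 exprNn !exprD exprM; ring.
  rewrite laurE_XnM ps_of_polyC rmorphXn rmorphN1 P2.
  by congr laurent; lia.
rewrite /ps_of_poly -horner_coef0 -[_.[0]]/(horner_eval 0 _) -trace_map_mx.
by rewrite -/(mx_at0 _) P_at0 mxtrace_mx22 add0r rmorphXn rmorphN1.
Qed.

Lemma oddz_subz (x y : nat) : oddz (x%:Z - y%:Z) = odd (x + y).
Proof.
rewrite /oddz; case: (leqP y x) => [le_yx|/ltnW le_xy].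
  by rewrite subzn // oddB // oddD.
by rewrite -opprB subzn // abszN /= oddB // oddD addbC.
Qed.

Lemma oddz_altsum a : oddz (altsum a) = odd (sumn a).
Proof. by case: a => [|x a] //=; rewrite -sumnE oddz_subz. Qed.

Theorem mainTheorem13 (a : seq nat) (d : int) (beta : word) :
  (0 < size a)%N ->
  has (fun ai => ai != 0%N) a ->
  conjugate_B3 beta (model_word a d) ->
  exists l1 l2 : series,
    [/\ is_puiseux l1, is_puiseux l2,
        Eadd l1 l2 = rho_tr beta & Emul l1 l2 = rho_det beta] /\
    (~~ odd (size a) && ~~ odd (\sum_(ai <- a) ai)%N -> Epos l1 /\ Epos l2) /\
    (odd (size a) && oddz (altsum a) -> Eneg l1 /\ Eneg l2) /\
    (oddz ((size a)%:Z - (\sum_(ai <- a) ai)%N%:Z) ->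
       (Epos l1 /\ Eneg l2) \/ (Eneg l1 /\ Epos l2)).
Proof.
move=> a_gt0 _ /conjugate_B3_rho[-> ->]; rewrite -sumnE oddz_altsum oddz_subz.
have [m [tau [tr_eq det_eq tau0]]] := rho_model_word d a_gt0.
have tau0_neq0 : tau 0%N != 0 by rewrite tau0 signr_eq0.
have p_gt0 : (0 < sumn a + size a)%N by rewrite addn_gt0 a_gt0 orbT.
have [nu [mu [add_eq mul_eq nu0 mu0]]] :=
  laurent_quadratic_roots m ((-1) ^+ (sumn a + size a)) p_gt0 tau0_neq0.
exists (laurent m nu), (laurent (m + (sumn a + size a)%N%:Z) mu); split.
  by split; rewrite ?add_eq ?mul_eq ?tr_eq ?det_eq //; apply: is_puiseux_laurent.
have /laurent_sign sign1 : nu 0%N = (-1) ^+ sumn a by rewrite nu0 tau0.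
have /laurent_sign sign2 : mu 0%N = (-1) ^+ size a.
  by rewrite mu0 tau0 exprD mulrC mulKf ?signr_eq0.
rewrite oddD; move: (sign1 m) (sign2 (m + (sumn a + size a)%N%:Z)).
case: (odd (sumn a)); case: (odd (size a)) => /= s1 s2.
- by do !split.
- by do !split=> //; right.
- by do !split=> //; move=> _; left.
- by do !split.
Qed.
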